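(* For every type $T$ there exist a unit type $U$ and a scalar $\alpha\in\mathcal S$ such that $T\equiv\alpha.U$.
   Context: Fix a commutative ring $(\mathcal S,+,\times)$. Types: $T ::= U \mid \forall X.T \mid \alpha.T \mid \overline0$; unit types: $U ::= X \mid U\to T \mid \forall X.U$ ($\alpha\in\mathcal S$, $X$ type variables). Type equivalence $\equiv$ is the least congruence on types with $\alpha.\overline0\equiv\overline0$, $0.T\equiv\overline0$, $1.T\equiv T$, $\alpha.(\beta.T)\equiv(\alpha\times\beta).T$, $\forall X.\alpha.T\equiv\alpha.\forall X.T$. *)

From mathcomp Require Import all_boot all_algebra.
Set Implicit Arguments. Unset Strict Implicit. Unset Printing Implicit Defensive.
Import GRing.Theory.
Local Open Scope ring_scope.

(* Raw syntax of types, with type variables as de Bruijn indices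
   (so binders are identified up to alpha-conversion). *)
Inductive ty (S : Type) : Type :=
| TVar  : nat -> ty S
| TArr  : ty S -> ty S -> ty S
| TAll  : ty S -> ty S
| TScal : S -> ty S -> ty S
| TZero : ty S.
Arguments TVar {S}. Arguments TZero {S}.

Inductive is_unit (S : Type) : ty S -> Prop :=
| U_var  : forall n, is_unit (TVar n)
| U_arr  : forall u t, is_unit u -> is_type t -> is_unit (TArr u t)
| U_all  : forall u, is_unit u -> is_unit (TAll u)
with is_type (S : Type) : ty S -> Prop :=
| T_unit : forall u, is_unit u -> is_type u
| T_all  : forall t, is_type t -> is_type (TAll t)
| T_scal : forall a t, is_type t -> is_type (TScal a t)
| T_zero : is_type TZero.

(* Type equivalence: the least congruence on (well-formed) types generated
   by the five axioms. Every related pair consists of types. *)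
Inductive ty_equiv (S : comPzRingType) : ty S -> ty S -> Prop :=
| E_refl  : forall t, is_type t -> ty_equiv t t
| E_sym   : forall t t', ty_equiv t t' -> ty_equiv t' t
| E_trans : forall t1 t2 t3, ty_equiv t1 t2 -> ty_equiv t2 t3 -> ty_equiv t1 t3
| E_scal0 : forall a : S, ty_equiv (TScal a TZero) TZero
| E_zero  : forall t, is_type t -> ty_equiv (TScal 0 t) TZero
| E_one   : forall t, is_type t -> ty_equiv (TScal 1 t) t
| E_mul   : forall (a b : S) t, is_type t ->
    ty_equiv (TScal a (TScal b t)) (TScal (a * b) t)
| E_allsc : forall (a : S) t, is_type t ->
    ty_equiv (TAll (TScal a t)) (TScal a (TAll t))
| C_arrl  : forall u u' t, is_unit u -> is_unit u' -> is_type t ->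
    ty_equiv u u' -> ty_equiv (TArr u t) (TArr u' t)
| C_arrr  : forall u t t', is_unit u -> ty_equiv t t' ->
    ty_equiv (TArr u t) (TArr u t')
| C_all   : forall t t', ty_equiv t t' -> ty_equiv (TAll t) (TAll t')
| C_scal  : forall (a : S) t t', ty_equiv t t' -> ty_equiv (TScal a t) (TScal a t').

From mathcomp Require Import all_boot all_algebra.
Local Open Scope ring_scope.

(* Induction on the grammar of types: a unit type is 1.U, the zero type is
   0.X for any variable X, and the scalar of a normal form is pushed out
   through forall X by forall X.a.T == a.forall X.T, resp. merged with an
   outer scalar by b.(a.T) == (b*a).T. *)

Section NormalForm.

Variable S : comPzRingType.
Implicit Types (a b : S) (t u : ty S).

Lemma ty_equiv_scal1 t : is_type t -> ty_equiv t (TScal 1 t).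
Proof. by move=> ht; apply/E_sym/E_one. Qed.

Lemma ty_equiv_zero_scal0 t : is_type t -> ty_equiv TZero (TScal 0 t).
Proof. by move=> ht; apply/E_sym/E_zero. Qed.

Lemma ty_equiv_all_scal a t u :
  is_type u -> ty_equiv t (TScal a u) -> ty_equiv (TAll t) (TScal a (TAll u)).
Proof. by move=> hu htu; apply: E_trans (C_all htu) (E_allsc a hu). Qed.

Lemma ty_equiv_scal_scal a b t u :
  is_type u -> ty_equiv t (TScal b u) -> ty_equiv (TScal a t) (TScal (a * b) u).
Proof. by move=> hu htu; apply: E_trans (C_scal a htu) (E_mul a b hu). Qed.

End NormalForm.

Theorem mainTheorem17 (S : comPzRingType) (T : ty S) :
  is_type T -> exists (U : ty S) (a : S), is_unit U /\ ty_equiv T (TScal a U).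
Proof.
elim=> [u hu | t _ [u [a [hu htu]]] | b t _ [u [a [hu htu]]] |].
- by exists u, 1; split; last exact/ty_equiv_scal1/T_unit.
- exists (TAll u), a; split; first exact: U_all.
  exact/ty_equiv_all_scal/htu/T_unit.
- exists u, (b * a); split=> //.
  exact/ty_equiv_scal_scal/htu/T_unit.
- exists (TVar 0), 0; split; first exact: U_var.
  exact/ty_equiv_zero_scal0/T_unit/U_var.
Qed.
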